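(* Let $R$ be a linear involution of $\mathbb{T}^2$ induced by an integer matrix $A$ with $\det A=\pm1$, $A^2=\mathrm{Id}$, $A\neq\pm\mathrm{Id}$. Then the set of area-preserving $R$-reversible Anosov diffeomorphisms of $\mathbb{T}^2$ is non-empty and has no isolated points in the $C^1$ topology.
   Context: $\mathbb{T}^2=\mathbb{R}^2/\mathbb{Z}^2$ with normalized Lebesgue measure $\mu$. A diffeomorphism $f$ is $R$-reversible if $R\circ f=f^{-1}\circ R$; it is Anosov if $\mathbb{T}^2$ is a uniformly hyperbolic set for $f$. *)

(* classical reals. The torus T^2 = R^2/Z^2 is handled via lifts. *)
From Stdlib Require Import Reals Lra ZArith.
Open Scope R_scope.

Definition R2 : Type := (R * R)%type.

Definition vadd (u v : R2) : R2 := (fst u + fst v, snd u + snd v).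
Definition vsub (u v : R2) : R2 := (fst u - fst v, snd u - snd v).
Definition vscal (a : R) (v : R2) : R2 := (a * fst v, a * snd v).
Definition vzero : R2 := (0, 0).
Definition vnorm (v : R2) : R := sqrt (fst v * fst v + snd v * snd v).

(* 2x2 real matrices: ((m11, m12), (m21, m22)) *)
Definition Mat2 : Type := (R2 * R2)%type.
Definition mapply (M : Mat2) (v : R2) : R2 :=
  (fst (fst M) * fst v + snd (fst M) * snd v,
   fst (snd M) * fst v + snd (snd M) * snd v).
Definition mmul (M N : Mat2) : Mat2 :=
  ((fst (fst M) * fst (fst N) + snd (fst M) * fst (snd N),
    fst (fst M) * snd (fst N) + snd (fst M) * snd (snd N)),
   (fst (snd M) * fst (fst N) + snd (snd M) * fst (snd N),
    fst (snd M) * snd (fst N) + snd (snd M) * snd (snd N))).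
Definition mid : Mat2 := ((1, 0), (0, 1)).
Definition msub (M N : Mat2) : Mat2 := (vsub (fst M) (fst N), vsub (snd M) (snd N)).
Definition mnorm (M : Mat2) : R :=
  sqrt (fst (fst M) ^ 2 + snd (fst M) ^ 2 + fst (snd M) ^ 2 + snd (snd M) ^ 2).

Definition isZ (x : R) : Prop := exists z : Z, x = IZR z.
Definition isZ2 (v : R2) : Prop := isZ (fst v) /\ isZ (snd v).

(* F : R^2 -> R^2 is the lift of a (well-defined) self-map of T^2 *)
Definition descends (F : R2 -> R2) : Prop :=
  forall p k, isZ2 k -> isZ2 (vsub (F (vadd p k)) (F p)).

(* two lifts induce the same map of T^2 *)
Definition same_torus_map (F G : R2 -> R2) : Prop :=
  forall p, isZ2 (vsub (F p) (G p)).

Definition cont2 (phi : R2 -> R) : Prop :=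
  forall p eps, 0 < eps -> exists delta, 0 < delta /\
    forall q, vnorm (vsub q p) < delta -> Rabs (phi q - phi p) < eps.
Definition contM (D : R2 -> Mat2) : Prop :=
  forall p eps, 0 < eps -> exists delta, 0 < delta /\
    forall q, vnorm (vsub q p) < delta -> mnorm (msub (D q) (D p)) < eps.

Definition has_deriv (F : R2 -> R2) (DF : R2 -> Mat2) : Prop :=
  forall p eps, 0 < eps -> exists delta, 0 < delta /\
    forall h, vnorm h < delta ->
      vnorm (vsub (vsub (F (vadd p h)) (F p)) (mapply (DF p) h)) <= eps * vnorm h.

Definition C1_with (F : R2 -> R2) (DF : R2 -> Mat2) : Prop :=
  has_deriv F DF /\ contM DF.

Definition C1 (F : R2 -> R2) : Prop := exists DF, C1_with F DF.

(* G is (a lift of) the inverse of the torus map induced by F *)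
Definition torus_inverse (F G : R2 -> R2) : Prop :=
  descends G /\ C1 G /\
  (forall p, isZ2 (vsub (F (G p)) p)) /\ (forall p, isZ2 (vsub (G (F p)) p)).

Definition diffeo (F : R2 -> R2) : Prop :=
  descends F /\ C1 F /\ exists G, torus_inverse F G.

(* Integral of a continuous Z^2-periodic function over T^2 w.r.t. normalized
   Lebesgue measure, as the limit of Riemann sums over the uniform grid. *)
Definition riemann_sum (phi : R2 -> R) (n : nat) : R :=
  let N := INR (S n) in
  sum_f_R0 (fun i => sum_f_R0 (fun j => phi (INR i / N, INR j / N)) n) n / (N * N).
Definition torus_integral (phi : R2 -> R) (I : R) : Prop :=
  Un_cv (riemann_sum phi) I.

Definition periodic (phi : R2 -> R) : Prop :=
  forall p k, isZ2 k -> phi (vadd p k) = phi p.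

(* area preserving: f_* mu = mu, tested on continuous functions (Riesz) *)
Definition area_preserving (F : R2 -> R2) : Prop :=
  forall phi : R2 -> R, cont2 phi -> periodic phi ->
    forall I, torus_integral phi I -> torus_integral (fun p => phi (F p)) I.

Definition linmap (a b c d : Z) (p : R2) : R2 :=
  (IZR a * fst p + IZR b * snd p, IZR c * fst p + IZR d * snd p).

Definition reversible (Rm F : R2 -> R2) : Prop :=
  exists G, torus_inverse F G /\ forall p, isZ2 (vsub (Rm (F p)) (G (Rm p))).

Fixpoint iterF (F : R2 -> R2) (n : nat) (p : R2) : R2 :=
  match n with O => p | S m => F (iterF F m p) end.
Fixpoint iterDF (F : R2 -> R2) (DF : R2 -> Mat2) (n : nat) (p : R2) : Mat2 :=
  match n with O => mid | S m => mmul (DF (iterF F m p)) (iterDF F DF m p) end.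

Definition subspace (E : R2 -> Prop) : Prop :=
  E vzero /\ (forall u v, E u -> E v -> E (vadd u v)) /\
  (forall a v, E v -> E (vscal a v)).

Definition anosov (F : R2 -> R2) : Prop :=
  exists DF : R2 -> Mat2, C1_with F DF /\
  exists Es Eu : R2 -> R2 -> Prop,
    (forall p, subspace (Es p) /\ subspace (Eu p)) /\
    (forall p k, isZ2 k -> forall v, (Es (vadd p k) v <-> Es p v) /\ (Eu (vadd p k) v <-> Eu p v)) /\
    (forall p v, exists s u, Es p s /\ Eu p u /\ v = vadd s u) /\
    (forall p v, Es p v -> Eu p v -> v = vzero) /\
    (forall p w, Es (F p) w <-> exists v, Es p v /\ w = mapply (DF p) v) /\
    (forall p w, Eu (F p) w <-> exists v, Eu p v /\ w = mapply (DF p) v) /\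
    exists C lam, 0 < C /\ 0 < lam < 1 /\
      (forall p v n, Es p v -> vnorm (mapply (iterDF F DF n p) v) <= C * lam ^ n * vnorm v) /\
      (* equivalent to ||Df^{-n} w|| <= C lam^n ||w|| on Eu, by invariance *)
      (forall p v n, Eu p v -> vnorm v <= C * lam ^ n * vnorm (mapply (iterDF F DF n p) v)).

Definition rev_anosov_area (Rm F : R2 -> R2) : Prop :=
  diffeo F /\ area_preserving F /\ reversible Rm F /\ anosov F.

Definition C1_close (eps : R) (F G : R2 -> R2) : Prop :=
  exists DF DG, C1_with F DF /\ C1_with G DG /\
  exists k, isZ2 k /\ forall p,
    vnorm (vsub (vsub (F p) (G p)) k) < eps /\ mnorm (msub (DF p) (DG p)) < eps.

(* Existence: the involution A has trace 0 (as A <> +-I), and one finds a second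
   integer involution B with tr(AB) >= 3. The hyperbolic automorphism AB preserves
   area and is A-reversible, since A (AB) A = BA = (AB)^-1.
   No isolated points: A fixes a nonzero vector v, so translations by multiples of v
   commute with A. Conjugating f by the translation by s v (s small) gives an
   area-preserving, A-reversible Anosov map C^1-close to f. If all these conjugates
   induced f itself, then f(x + s v) = f(x) + s v for small s, so Df would fix v
   everywhere, which no Anosov map allows. *)

From Pilot Require Import Defs.
From Stdlib Require Import Reals Lra Lia Psatz ZArith Classical FunctionalExtensionality.
From HB Require Import structures.
From mathcomp Require ssreflect ssrfun ssrbool eqtype ssrnat seq fintype bigop.
Open Scope R_scope.

Ltac vec_eq := unfold vadd, vsub, vscal, vzero; simpl; try (f_equal; ring).

Lemma Rabs_le_of_sqr_le x y : 0 <= y -> x * x <= y * y -> Rabs x <= y.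
Proof. intros Hy Hxy. apply Rsqr_incr_0_var; auto. rewrite <- Rsqr_abs. exact Hxy. Qed.

Lemma sqrt_le_of_le_sqr x y : 0 <= y -> x <= y * y -> sqrt x <= y.
Proof. intros Hy Hx. rewrite <- (sqrt_square y Hy). apply sqrt_le_1_alt; auto. Qed.

Lemma vnorm_ge0 v : 0 <= vnorm v.
Proof. apply sqrt_pos. Qed.

Lemma vnorm_sqr v : vnorm v * vnorm v = fst v * fst v + snd v * snd v.
Proof. apply sqrt_sqrt; nra. Qed.

Lemma Rabs_fst_le_vnorm v : Rabs (fst v) <= vnorm v.
Proof. pose proof (vnorm_sqr v); pose proof (vnorm_ge0 v). apply Rabs_le_of_sqr_le; nra. Qed.

Lemma Rabs_snd_le_vnorm v : Rabs (snd v) <= vnorm v.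
Proof. pose proof (vnorm_sqr v); pose proof (vnorm_ge0 v). apply Rabs_le_of_sqr_le; nra. Qed.

Lemma vnorm_le_l1 v : vnorm v <= Rabs (fst v) + Rabs (snd v).
Proof.
  pose proof (Rabs_pos (fst v)); pose proof (Rabs_pos (snd v)).
  apply sqrt_le_of_le_sqr; [lra|].
  pose proof (Rsqr_abs (fst v)); pose proof (Rsqr_abs (snd v)). unfold Rsqr in *. nra.
Qed.

Lemma dot_le_vnorm u v : fst u * fst v + snd u * snd v <= vnorm u * vnorm v.
Proof.
  eapply Rle_trans; [apply Rle_abs|].
  pose proof (vnorm_ge0 u); pose proof (vnorm_ge0 v).
  apply Rabs_le_of_sqr_le; [nra|].
  replace (vnorm u * vnorm v * (vnorm u * vnorm v)) with ((vnorm u * vnorm u) * (vnorm v * vnorm v)) by ring.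
  rewrite !vnorm_sqr. pose proof (Rle_0_sqr (fst u * snd v - snd u * fst v)). unfold Rsqr in *. nra.
Qed.

Lemma vnorm_triangle u v : vnorm (vadd u v) <= vnorm u + vnorm v.
Proof.
  pose proof (vnorm_ge0 u); pose proof (vnorm_ge0 v); pose proof (dot_le_vnorm u v).
  pose proof (vnorm_sqr u); pose proof (vnorm_sqr v).
  apply sqrt_le_of_le_sqr; [lra|]. simpl. nra.
Qed.

Lemma vnorm_vsub_triangle p q r : vnorm (vsub q p) <= vnorm (vsub q r) + vnorm (vsub r p).
Proof. replace (vsub q p) with (vadd (vsub q r) (vsub r p)) by vec_eq. apply vnorm_triangle. Qed.

Lemma vnorm_vscal a v : vnorm (vscal a v) = Rabs a * vnorm v.
Proof.
  unfold vnorm, vscal; simpl.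
  replace (a * fst v * (a * fst v) + a * snd v * (a * snd v))
    with ((a * a) * (fst v * fst v + snd v * snd v)) by ring.
  rewrite sqrt_mult_alt by nra. rewrite <- sqrt_Rsqr_abs. reflexivity.
Qed.

Lemma vnorm_vopp v : vnorm (vscal (-1) v) = vnorm v.
Proof. rewrite vnorm_vscal, Rabs_left by lra. ring. Qed.

Lemma vnorm_vsub_sym p q : vnorm (vsub p q) = vnorm (vsub q p).
Proof. replace (vsub p q) with (vscal (-1) (vsub q p)) by vec_eq. apply vnorm_vopp. Qed.

Lemma vnorm_vzero : vnorm vzero = 0.
Proof. unfold vnorm; simpl. rewrite Rmult_0_l, Rplus_0_l. apply sqrt_0. Qed.

Lemma vnorm_eq0 v : vnorm v = 0 -> v = vzero.
Proof.
  intro H. pose proof (Rabs_fst_le_vnorm v); pose proof (Rabs_snd_le_vnorm v).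
  pose proof (Rabs_pos (fst v)); pose proof (Rabs_pos (snd v)).
  destruct v as [x y]; simpl in *. unfold vzero.
  f_equal; apply NNPP; intro Hne; apply Rabs_no_R0 in Hne; lra.
Qed.

Lemma vnorm_le_eps_eq0 v : (forall eps, 0 < eps -> vnorm v <= eps) -> v = vzero.
Proof.
  intro H. apply vnorm_eq0. pose proof (vnorm_ge0 v).
  destruct (Rle_lt_or_eq_dec 0 (vnorm v)) as [Hlt|]; auto.
  specialize (H (vnorm v / 2)). lra.
Qed.

Lemma vsub_eq0 u v : vsub u v = vzero -> u = v.
Proof. destruct u, v; unfold vsub, vzero; simpl; intro E; injection E; intros; f_equal; lra. Qed.

Lemma vadd_vsub u t : vadd (vsub u t) t = u.
Proof. destruct u; vec_eq. Qed.

Lemma vsub_vadd u t : vsub (vadd u t) t = u.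
Proof. destruct u; vec_eq. Qed.

Lemma vsub_vadd_l u r : vsub (vadd u r) u = r.
Proof. destruct u, r; vec_eq. Qed.

Lemma vadd_comm_assoc p k t : vadd (vadd p k) t = vadd (vadd p t) k.
Proof. destruct p; vec_eq. Qed.

Lemma isZ_IZR z : isZ (IZR z).
Proof. exists z; reflexivity. Qed.

Lemma isZ_add x y : isZ x -> isZ y -> isZ (x + y).
Proof. intros [a ->] [b ->]. rewrite <- plus_IZR. apply isZ_IZR. Qed.

Lemma isZ_mul x y : isZ x -> isZ y -> isZ (x * y).
Proof. intros [a ->] [b ->]. rewrite <- mult_IZR. apply isZ_IZR. Qed.

Lemma isZ_small x : isZ x -> Rabs x < 1 -> x = 0.
Proof.
  intros [z ->] H. apply Rabs_def2 in H. destruct H as [H1 H2].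
  rewrite <- opp_IZR in H2. apply lt_IZR in H1, H2. replace z with 0%Z by lia. reflexivity.
Qed.

Lemma isZ2_vzero : isZ2 vzero.
Proof. split; apply (isZ_IZR 0). Qed.

Lemma isZ2_small k : isZ2 k -> vnorm k < 1 -> k = vzero.
Proof.
  intros [H1 H2] H. pose proof (Rabs_fst_le_vnorm k); pose proof (Rabs_snd_le_vnorm k).
  destruct k; unfold vzero; f_equal; apply isZ_small; simpl in *; auto; lra.
Qed.

Lemma mapply_vadd M u v : mapply M (vadd u v) = vadd (mapply M u) (mapply M v).
Proof. unfold mapply, vadd; simpl; f_equal; ring. Qed.

Lemma mapply_vscal M t v : mapply M (vscal t v) = vscal t (mapply M v).
Proof. unfold mapply, vscal; simpl; f_equal; ring. Qed.

Lemma mapply_mmul M N v : mapply (mmul M N) v = mapply M (mapply N v).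
Proof. unfold mapply, mmul; simpl; f_equal; ring. Qed.

Lemma mapply_mid v : mapply mid v = v.
Proof. destruct v; unfold mapply, mid; simpl; f_equal; ring. Qed.

Definition mabs (M : Mat2) : R :=
  Rabs (fst (fst M)) + Rabs (snd (fst M)) + Rabs (fst (snd M)) + Rabs (snd (snd M)).

Lemma mabs_ge0 M : 0 <= mabs M.
Proof.
  unfold mabs. pose proof (Rabs_pos (fst (fst M))); pose proof (Rabs_pos (snd (fst M))).
  pose proof (Rabs_pos (fst (snd M))); pose proof (Rabs_pos (snd (snd M))). lra.
Qed.

Lemma mapply_le_mabs M h : vnorm (mapply M h) <= mabs M * vnorm h.
Proof.
  eapply Rle_trans; [apply vnorm_le_l1|].
  pose proof (Rabs_fst_le_vnorm h); pose proof (Rabs_snd_le_vnorm h).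
  destruct M as [[m1 m2] [m3 m4]]; unfold mapply, mabs; simpl.
  pose proof (Rabs_triang (m1 * fst h) (m2 * snd h)).
  pose proof (Rabs_triang (m3 * fst h) (m4 * snd h)).
  rewrite !Rabs_mult in *.
  pose proof (Rabs_pos m1); pose proof (Rabs_pos m2); pose proof (Rabs_pos m3); pose proof (Rabs_pos m4).
  pose proof (Rabs_pos (fst h)); pose proof (Rabs_pos (snd h)).
  nra.
Qed.

Lemma mnorm_le_mabs M : mnorm M <= mabs M.
Proof.
  destruct M as [[m1 m2] [m3 m4]]; unfold mnorm, mabs; simpl.
  pose proof (Rabs_pos m1); pose proof (Rabs_pos m2); pose proof (Rabs_pos m3); pose proof (Rabs_pos m4).
  apply sqrt_le_of_le_sqr; [lra|].
  pose proof (Rsqr_abs m1); pose proof (Rsqr_abs m2); pose proof (Rsqr_abs m3); pose proof (Rsqr_abs m4).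
  unfold Rsqr in *. nra.
Qed.

Lemma mnorm_entries_le M :
  Rabs (fst (fst M)) <= mnorm M /\ Rabs (snd (fst M)) <= mnorm M /\
  Rabs (fst (snd M)) <= mnorm M /\ Rabs (snd (snd M)) <= mnorm M.
Proof.
  assert (Hsq : mnorm M * mnorm M =
    fst (fst M) ^ 2 + snd (fst M) ^ 2 + fst (snd M) ^ 2 + snd (snd M) ^ 2) by (apply sqrt_sqrt; nra).
  assert (0 <= mnorm M) by apply sqrt_pos.
  destruct M as [[m1 m2] [m3 m4]]; simpl in *.
  repeat split; apply Rabs_le_of_sqr_le; nra.
Qed.

(** * Uniform continuity on the torus *)

Definition contF (F : R2 -> R2) : Prop :=
  forall p eps, 0 < eps -> exists delta, 0 < delta /\
    forall q, vnorm (vsub q p) < delta -> vnorm (vsub (F q) (F p)) < eps.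

Definition near_diag (P : R2 -> R2 -> Prop) : Prop :=
  exists delta, 0 < delta /\ forall p q, vnorm (vsub q p) < delta -> P p q.

Definition unif_cont2 (g : R2 -> R) : Prop :=
  forall eps, 0 < eps -> near_diag (fun p q => Rabs (g q - g p) < eps).

Lemma Rlt_Rmin_l x y z : x < Rmin y z -> x < y.
Proof. intro H. eapply Rlt_le_trans; [exact H | apply Rmin_l]. Qed.

Lemma Rlt_Rmin_r x y z : x < Rmin y z -> x < z.
Proof. intro H. eapply Rlt_le_trans; [exact H | apply Rmin_r]. Qed.

Lemma near_diag_and P Q : near_diag P -> near_diag Q -> near_diag (fun p q => P p q /\ Q p q).
Proof.
  intros [d1 [Hd1 H1]] [d2 [Hd2 H2]]. exists (Rmin d1 d2). split; [apply Rmin_glb_lt; auto|].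
  intros p q Hpq. split; [apply H1; eapply Rlt_Rmin_l | apply H2; eapply Rlt_Rmin_r]; eauto.
Qed.

Lemma near_diag_impl (P Q : R2 -> R2 -> Prop) :
  (forall p q, P p q -> Q p q) -> near_diag P -> near_diag Q.
Proof. intros HPQ [d [Hd H]]. exists d; split; auto. Qed.

Lemma Rabs_sub_le a b : Rabs (a - b) <= Rabs a + Rabs b.
Proof. unfold Rminus. eapply Rle_trans; [apply Rabs_triang|]. rewrite Rabs_Ropp. lra. Qed.

(* Real induction: a property of subintervals that holds near every point and glues
   along adjacent intervals holds on [a, b]; consider the supremum of the reachable endpoints. *)
Lemma interval_induction (G : R -> R -> R -> Prop) (a b : R) :
  a <= b ->
  (forall u v w d1 d2, u <= v -> v <= w -> G u v d1 -> G v w d2 -> G u w (Rmin d1 d2)) ->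
  (forall u v u' v' d, u <= u' -> v' <= v -> G u v d -> G u' v' d) ->
  (forall x, a <= x <= b -> exists e, 0 < e /\ exists d, 0 < d /\ G (x - e) (x + e) d) ->
  exists d, 0 < d /\ G a b d.
Proof.
  intros Hab Hglue Hmono Hloc.
  set (S := fun x => a <= x <= b /\ exists d, 0 < d /\ G a x d).
  assert (Sa : S a).
  { destruct (Hloc a) as [e [He [d [Hd HG]]]]; [lra|].
    split; [lra|]. exists d; split; auto. eapply Hmono; [| |exact HG]; lra. }
  assert (Hbound : bound S) by (exists b; intros x [Hx _]; lra).
  destruct (completeness S Hbound (ex_intro _ a Sa)) as [s [Hub Hlub]].
  assert (Has : a <= s) by (apply Hub; auto).
  assert (Hsb : s <= b) by (apply Hlub; intros x [Hx _]; lra).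
  destruct (Hloc s) as [e [He [ds [Hds HGs]]]]; [lra|].
  assert (Hx : exists x, S x /\ s - e < x).
  { apply NNPP; intro Hn. assert (s <= s - e); [|lra].
    apply Hlub. intros x Sx. apply Rnot_lt_le. intro. apply Hn. exists x; auto. }
  destruct Hx as [x [[Hx1 [dx [Hdx HGx]]] Hx2]].
  assert (Hxs : x <= s) by (apply Hub; split; auto; exists dx; auto).
  set (y := Rmin b (s + e / 2)).
  assert (Hxy : x <= y) by (unfold y; apply Rmin_glb; lra).
  assert (HGy : G a y (Rmin dx ds)).
  { apply Hglue with x; auto; [lra|].
    eapply Hmono; [| |exact HGs]; [lra|]. unfold y. pose proof (Rmin_r b (s + e / 2)). lra. }
  assert (Hdy : 0 < Rmin dx ds) by (apply Rmin_glb_lt; auto).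
  assert (Sy : S y) by (split; [split; [lra | apply Rmin_l] | exists (Rmin dx ds); auto]).
  assert (y <= s) by (apply Hub; auto).
  exists (Rmin dx ds); split; auto.
  unfold y in *. destruct (Rle_dec b (s + e / 2)).
  - rewrite Rmin_left in HGy by auto. auto.
  - rewrite Rmin_right in * by lra. lra.
Qed.

Lemma unif_cont_near_unit_segment (g : R2 -> R) x0 : cont2 g ->
  forall eps, 0 < eps -> exists d, 0 < d /\ exists eta, 0 < eta /\
    forall p q, Rabs (fst p - x0) < eta -> 0 <= snd p <= 1 -> vnorm (vsub q p) < d ->
      Rabs (g q - g p) < eps.
Proof.
  intros Hg eps Heps.
  set (G := fun u v d => exists eta, 0 < eta /\ forall p q, Rabs (fst p - x0) < eta ->
     u <= snd p <= v -> vnorm (vsub q p) < d -> Rabs (g q - g p) < eps).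
  destruct (interval_induction G 0 1) as [d [Hd [eta [Heta H]]]].
  - lra.
  - intros u v w d1 d2 Huv Hvw [e1 [He1 H1]] [e2 [He2 H2]].
    exists (Rmin e1 e2); split; [apply Rmin_glb_lt; auto|].
    intros p q Hp Hp2 Hq.
    destruct (Rle_or_lt (snd p) v).
    + apply H1; [eapply Rlt_Rmin_l; eauto | lra | eapply Rlt_Rmin_l; eauto].
    + apply H2; [eapply Rlt_Rmin_r; eauto | lra | eapply Rlt_Rmin_r; eauto].
  - intros u v u' v' d Hu Hv [e [He H]]. exists e; split; auto.
    intros p q Hp Hp2 Hq. apply H; auto; lra.
  - intros y Hy.
    destruct (Hg (x0, y) (eps / 2)) as [dc [Hdc Hc]]; [lra|].
    exists (dc / 4); split; [lra|]. exists (dc / 4); split; [lra|].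
    exists (dc / 4); split; [lra|].
    intros p q Hp Hp2 Hq.
    assert (Hpc : vnorm (vsub p (x0, y)) < dc / 2).
    { eapply Rle_lt_trans; [apply vnorm_le_l1|]. simpl.
      assert (Rabs (snd p - y) <= dc / 4) by (apply Rabs_le; lra). lra. }
    assert (Hqc : vnorm (vsub q (x0, y)) < dc).
    { eapply Rle_lt_trans; [apply (vnorm_vsub_triangle (x0, y) q p)|]. lra. }
    pose proof (Hc p ltac:(lra)). pose proof (Hc q Hqc).
    replace (g q - g p) with ((g q - g (x0, y)) - (g p - g (x0, y))) by ring.
    eapply Rle_lt_trans; [apply Rabs_sub_le|]. lra.
  - exists d; split; auto. exists eta; split; auto.
Qed.

Lemma unif_cont_unit_square (g : R2 -> R) : cont2 g ->
  forall eps, 0 < eps -> exists d, 0 < d /\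
    forall p q, 0 <= fst p <= 1 -> 0 <= snd p <= 1 -> vnorm (vsub q p) < d ->
      Rabs (g q - g p) < eps.
Proof.
  intros Hg eps Heps.
  set (G := fun u v d => forall p q, u <= fst p <= v -> 0 <= snd p <= 1 ->
     vnorm (vsub q p) < d -> Rabs (g q - g p) < eps).
  destruct (interval_induction G 0 1) as [d [Hd H]]; [lra | | | |exists d; auto].
  - intros u v w d1 d2 Huv Hvw H1 H2 p q Hp Hp2 Hq.
    destruct (Rle_or_lt (fst p) v).
    + apply H1; [lra | auto | eapply Rlt_Rmin_l; eauto].
    + apply H2; [lra | auto | eapply Rlt_Rmin_r; eauto].
  - intros u v u' v' d Hu Hv H p q Hp Hp2 Hq. apply H; auto; lra.
  - intros x Hx. destruct (unif_cont_near_unit_segment g x Hg eps Heps) as [d [Hd [eta [Heta H]]]].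
    exists (eta / 2); split; [lra|]. exists d; split; auto.
    intros p q Hp Hp2 Hq. apply H; auto. apply Rabs_def1; lra.
Qed.

Lemma floor_exists x : exists z : Z, 0 <= x - IZR z <= 1.
Proof.
  destruct (archimed x) as [H1 H2]. exists (up x - 1)%Z. rewrite minus_IZR. simpl. lra.
Qed.

Lemma unif_cont2_of_invariant_increments (g : R2 -> R) : cont2 g ->
  (forall k p q, isZ2 k -> g (vadd q k) - g (vadd p k) = g q - g p) ->
  unif_cont2 g.
Proof.
  intros Hg Hinv eps Heps.
  destruct (unif_cont_unit_square g Hg eps Heps) as [d [Hd H]].
  exists d; split; auto. intros p q Hq.
  destruct (floor_exists (fst p)) as [z1 Hz1]. destruct (floor_exists (snd p)) as [z2 Hz2].
  set (k := (IZR z1, IZR z2)).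
  assert (Hk : isZ2 k) by (split; apply isZ_IZR).
  rewrite <- (vadd_vsub p k), <- (vadd_vsub q k), Hinv by auto.
  apply H; simpl; try lra.
  replace (vsub (vsub q k) (vsub p k)) with (vsub q p) by vec_eq. auto.
Qed.

Lemma unif_cont2_periodic (g : R2 -> R) : cont2 g -> periodic g -> unif_cont2 g.
Proof.
  intros Hg Hp. apply unif_cont2_of_invariant_increments; auto.
  intros k p q Hk. rewrite !Hp; auto.
Qed.

(** * Lifts of continuous torus maps *)

Lemma has_deriv_contF F DF : has_deriv F DF -> contF F.
Proof.
  intros HD p eps Heps.
  destruct (HD p 1 Rlt_0_1) as [d1 [Hd1 H1]].
  set (K := mabs (DF p) + 2).
  assert (HK : 0 < K) by (unfold K; pose proof (mabs_ge0 (DF p)); lra).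
  exists (Rmin d1 (eps / K)). split; [apply Rmin_glb_lt; auto; apply Rdiv_lt_0_compat; lra|].
  intros q Hq. set (h := vsub q p).
  assert (Hh : vnorm h * K < eps).
  { apply Rlt_Rmin_r, (Rmult_lt_compat_r K) in Hq; [|lra].
    replace (eps / K * K) with eps in Hq by (field; lra). exact Hq. }
  pose proof (H1 h (Rlt_Rmin_l _ _ _ Hq)) as Hlin.
  replace (vadd p h) with q in Hlin by (unfold h; destruct p, q; vec_eq).
  replace (vsub (F q) (F p)) with (vadd (vsub (vsub (F q) (F p)) (mapply (DF p) h)) (mapply (DF p) h)) by vec_eq.
  eapply Rle_lt_trans; [apply vnorm_triangle|].
  pose proof (mapply_le_mabs (DF p) h). pose proof (vnorm_ge0 h).
  unfold K in Hh. nra.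
Qed.

Lemma cont2_fst F : contF F -> cont2 (fun p => fst (F p)).
Proof.
  intros H p eps Heps. destruct (H p eps Heps) as [d [Hd Hq]]. exists d; split; auto.
  intros q Hq'. eapply Rle_lt_trans; [|apply (Hq q Hq')]. apply (Rabs_fst_le_vnorm (vsub (F q) (F p))).
Qed.

Lemma cont2_snd F : contF F -> cont2 (fun p => snd (F p)).
Proof.
  intros H p eps Heps. destruct (H p eps Heps) as [d [Hd Hq]]. exists d; split; auto.
  intros q Hq'. eapply Rle_lt_trans; [|apply (Hq q Hq')]. apply (Rabs_snd_le_vnorm (vsub (F q) (F p))).
Qed.

Lemma cont2_sub f g : cont2 f -> cont2 g -> cont2 (fun p => f p - g p).
Proof.
  intros Hf Hg p eps Heps.
  destruct (Hf p (eps / 2)) as [d1 [Hd1 H1]]; [lra|].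
  destruct (Hg p (eps / 2)) as [d2 [Hd2 H2]]; [lra|].
  exists (Rmin d1 d2); split; [apply Rmin_glb_lt; auto|].
  intros q Hq.
  pose proof (H1 q (Rlt_Rmin_l _ _ _ Hq)). pose proof (H2 q (Rlt_Rmin_r _ _ _ Hq)).
  replace (f q - g q - (f p - g p)) with ((f q - f p) - (g q - g p)) by ring.
  eapply Rle_lt_trans; [apply Rabs_sub_le|]. lra.
Qed.

Lemma cont2_translate f t : cont2 f -> cont2 (fun p => f (vadd p t)).
Proof.
  intros Hf p eps Heps. destruct (Hf (vadd p t) eps Heps) as [d [Hd H]].
  exists d; split; auto. intros q Hq. apply H.
  replace (vsub (vadd q t) (vadd p t)) with (vsub q p) by vec_eq. auto.
Qed.

Lemma cont2_comp f F : cont2 f -> contF F -> cont2 (fun p => f (F p)).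
Proof.
  intros Hf HF p eps Heps. destruct (Hf (F p) eps Heps) as [d [Hd H]].
  destruct (HF p d Hd) as [d' [Hd' H']]. exists d'; split; auto.
Qed.

Lemma continuity_along_line (c : R2 -> R) p w : cont2 c ->
  continuity (fun s => c (vadd p (vscal s w))).
Proof.
  intros Hc x eps Heps.
  destruct (Hc (vadd p (vscal x w)) eps Heps) as [d [Hd H]].
  pose proof (vnorm_ge0 w).
  exists (d / (vnorm w + 1)). split; [apply Rlt_gt, Rdiv_lt_0_compat; lra|].
  intros y [_ Hy]. simpl in *. unfold R_dist in *. apply H.
  replace (vsub (vadd p (vscal y w)) (vadd p (vscal x w))) with (vscal (y - x) w) by vec_eq.
  rewrite vnorm_vscal.
  assert (Rabs (y - x) * (vnorm w + 1) < d).
  { apply (Rmult_lt_compat_r (vnorm w + 1)) in Hy; [|lra].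
    unfold Rdiv in Hy. rewrite Rmult_assoc, Rinv_l in Hy by lra. lra. }
  pose proof (Rabs_pos (y - x)). nra.
Qed.

Lemma IZR_add_half_not_IZR w z : IZR w + / 2 <> IZR z.
Proof.
  intro E. assert (IZR (2 * w + 1) = IZR (2 * z)) by (rewrite plus_IZR, !mult_IZR, <- E; simpl; field).
  apply eq_IZR in H. lia.
Qed.

Lemma integer_valued_const (c : R2 -> R) : cont2 c -> (forall x, isZ (c x)) ->
  forall p q, c p = c q.
Proof.
  intros Hc HZ p q.
  set (phi := fun s => c (vadd p (vscal s (vsub q p)))).
  assert (E0 : phi 0 = c p) by (unfold phi; f_equal; destruct p; vec_eq).
  assert (E1 : phi 1 = c q) by (unfold phi; f_equal; destruct p, q; vec_eq).
  destruct (HZ p) as [z0 Hz0]. destruct (HZ q) as [z1 Hz1].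
  destruct (Z.eq_dec z0 z1) as [->|Hne]; [congruence|]. exfalso.
  set (w := if Z_lt_le_dec z0 z1 then z0 else (z0 - 1)%Z).
  set (m := IZR w + / 2).
  assert (Hm : (phi 0 - m) * (phi 1 - m) <= 0).
  { rewrite E0, E1, Hz0, Hz1. unfold m, w.
    destruct (Z_lt_le_dec z0 z1).
    - assert (IZR z0 + 1 <= IZR z1) by (rewrite <- plus_IZR; apply IZR_le; lia). nra.
    - assert (IZR z1 + 1 <= IZR z0) by (rewrite <- plus_IZR; apply IZR_le; lia).
      rewrite minus_IZR. simpl. nra. }
  destruct (IVT_cor (fun s => phi s - m) 0 1) as [s [_ Hs]]; [| lra | auto |].
  - apply continuity_minus; [apply continuity_along_line; auto | apply continuity_const; intros ? ?; auto].
  - destruct (HZ (vadd p (vscal s (vsub q p)))) as [z Hz].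
    apply (IZR_add_half_not_IZR w z). unfold phi in Hs. fold m. lra.
Qed.

Lemma descends_increment_const F k : descends F -> contF F -> isZ2 k ->
  forall p q, vsub (F (vadd q k)) (F q) = vsub (F (vadd p k)) (F p).
Proof.
  intros HD HC Hk p q.
  assert (H1 : forall x, isZ2 (vsub (F (vadd x k)) (F x))) by (intro; apply HD; auto).
  unfold vsub. f_equal.
  - apply (integer_valued_const (fun x => fst (F (vadd x k)) - fst (F x))).
    + apply cont2_sub; [apply (cont2_translate (fun x => fst (F x))) |]; apply cont2_fst; auto.
    + intro x. apply (H1 x).
  - apply (integer_valued_const (fun x => snd (F (vadd x k)) - snd (F x))).
    + apply cont2_sub; [apply (cont2_translate (fun x => snd (F x))) |]; apply cont2_snd; auto.
    + intro x. apply (H1 x).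
Qed.

Lemma descends_increment_shift F k : descends F -> contF F -> isZ2 k ->
  forall p h, vsub (F (vadd (vadd p k) h)) (F (vadd p k)) = vsub (F (vadd p h)) (F p).
Proof.
  intros HD HC Hk p h.
  pose proof (descends_increment_const F k HD HC Hk p (vadd p h)) as E.
  rewrite vadd_comm_assoc.
  destruct (F (vadd (vadd p h) k)), (F (vadd p h)), (F (vadd p k)), (F p).
  unfold vsub in *; simpl in *. injection E; intros. f_equal; lra.
Qed.

Lemma deriv_unique (X : R2 -> R2) M1 M2 :
  (forall eps, 0 < eps -> exists d, 0 < d /\
     forall h, vnorm h < d -> vnorm (vsub (X h) (mapply M1 h)) <= eps * vnorm h) ->
  (forall eps, 0 < eps -> exists d, 0 < d /\
     forall h, vnorm h < d -> vnorm (vsub (X h) (mapply M2 h)) <= eps * vnorm h) ->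
  M1 = M2.
Proof.
  intros H1 H2.
  assert (Hdir : forall e, vnorm e = 1 -> mapply M1 e = mapply M2 e).
  { intros e He. apply vsub_eq0, vnorm_le_eps_eq0. intros eps Heps.
    destruct (H1 (eps / 2)) as [d1 [Hd1 G1]]; [lra|].
    destruct (H2 (eps / 2)) as [d2 [Hd2 G2]]; [lra|].
    set (t := Rmin d1 d2 / 2).
    assert (Hmin : 0 < Rmin d1 d2) by (apply Rmin_glb_lt; auto).
    assert (Ht : 0 < t) by (unfold t; lra).
    assert (Hn : vnorm (vscal t e) = t) by (rewrite vnorm_vscal, He, Rabs_pos_eq; lra).
    pose proof (G1 (vscal t e) ltac:(unfold t in *; pose proof (Rmin_l d1 d2); lra)) as K1.
    pose proof (G2 (vscal t e) ltac:(unfold t in *; pose proof (Rmin_r d1 d2); lra)) as K2.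
    rewrite Hn, mapply_vscal in K1, K2.
    pose proof (vnorm_triangle (vsub (X (vscal t e)) (vscal t (mapply M2 e)))
                  (vscal (-1) (vsub (X (vscal t e)) (vscal t (mapply M1 e))))) as T.
    rewrite vnorm_vopp in T.
    replace (vadd _ _) with (vscal t (vsub (mapply M1 e) (mapply M2 e))) in T by vec_eq.
    rewrite vnorm_vscal, Rabs_pos_eq in T by lra.
    apply Rmult_le_reg_l with t; auto. lra. }
  assert (He1 : vnorm (1, 0) = 1) by (unfold vnorm; simpl; rewrite Rmult_0_l, Rplus_0_r, Rmult_1_l; apply sqrt_1).
  assert (He2 : vnorm (0, 1) = 1) by (unfold vnorm; simpl; rewrite Rmult_0_l, Rplus_0_l, Rmult_1_l; apply sqrt_1).
  pose proof (Hdir _ He1) as D1. pose proof (Hdir _ He2) as D2.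
  destruct M1 as [[a1 b1] [c1 d1]], M2 as [[a2 b2] [c2 d2]].
  unfold mapply in D1, D2; simpl in D1, D2.
  injection D1; injection D2; intros. f_equal; f_equal; lra.
Qed.

Lemma deriv_periodic F DF k : descends F -> has_deriv F DF -> isZ2 k ->
  forall p, DF (vadd p k) = DF p.
Proof.
  intros HD HDF Hk p.
  pose proof (has_deriv_contF F DF HDF) as HC.
  apply (deriv_unique (fun h => vsub (F (vadd p h)) (F p))).
  - intros eps Heps. destruct (HDF (vadd p k) eps Heps) as [d [Hd H]].
    exists d; split; auto. intros h Hh.
    rewrite <- (descends_increment_shift F k HD HC Hk p h). auto.
  - intros eps Heps. destruct (HDF p eps Heps) as [d [Hd H]]. exists d; split; auto.
Qed.

(** * Riemann sums on the torus *)

Definition aff (a b c i j : Z) : Z := (a * i + b * j + c)%Z.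

Lemma aff_mod a b c M u1 u2 : M <> 0%Z ->
  (aff a b c u1 u2 mod M = aff a b c (u1 mod M) (u2 mod M) mod M)%Z.
Proof.
  intro HM. rewrite (Z.div_mod u1 M) at 1 by auto. rewrite (Z.div_mod u2 M) at 1 by auto.
  replace (aff a b c (M * (u1 / M) + u1 mod M) (M * (u2 / M) + u2 mod M))
    with (aff a b c (u1 mod M) (u2 mod M) + (a * (u1 / M) + b * (u2 / M)) * M)%Z by (unfold aff; ring).
  apply Z_mod_plus_full.
Qed.

Lemma aff_mod_inj (M a1 b1 c1 a2 b2 c2 ga gb gc ha hb hc x1 x2 y1 y2 : Z) :
  (forall i j, aff ga gb gc (aff a1 b1 c1 i j) (aff a2 b2 c2 i j) = i /\
               aff ha hb hc (aff a1 b1 c1 i j) (aff a2 b2 c2 i j) = j) ->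
  (0 <= x1 < M)%Z -> (0 <= x2 < M)%Z -> (0 <= y1 < M)%Z -> (0 <= y2 < M)%Z ->
  (aff a1 b1 c1 x1 x2 mod M = aff a1 b1 c1 y1 y2 mod M)%Z ->
  (aff a2 b2 c2 x1 x2 mod M = aff a2 b2 c2 y1 y2 mod M)%Z ->
  x1 = y1 /\ x2 = y2.
Proof.
  intros Hinv Hx1 Hx2 Hy1 Hy2 E1 E2.
  assert (HM : M <> 0%Z) by lia.
  destruct (Hinv x1 x2) as [I1 I2]. destruct (Hinv y1 y2) as [J1 J2].
  apply (f_equal (fun z => z mod M)%Z) in I1, I2, J1, J2.
  rewrite aff_mod, E1, E2, <- aff_mod in I1, I2 by auto.
  rewrite I1 in J1. rewrite I2 in J2. rewrite !Z.mod_small in J1, J2 by lia. auto.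
Qed.

Module GridSums.
Import mathcomp.boot.ssreflect mathcomp.boot.ssrfun mathcomp.boot.ssrbool mathcomp.boot.eqtype.
Import mathcomp.boot.ssrnat mathcomp.boot.seq mathcomp.boot.fintype mathcomp.boot.bigop.

Lemma Rplus_associative : associative Rplus.
Proof. by move=> x y z; rewrite Rplus_assoc. Qed.

HB.instance Definition _ := Monoid.isComLaw.Build R 0%R Rplus Rplus_associative Rplus_comm Rplus_0_l.

Lemma sum_f_R0_big (h : nat -> R) (n : nat) : sum_f_R0 h n = \big[Rplus/0%R]_(i < n.+1) h i.
Proof.
  elim: n => [|n IH]; first by rewrite big_ord_recr big_ord0 /= Rplus_0_l.
  by rewrite big_ord_recr /= -IH.
Qed.

Definition zmodn (n : nat) (z : Z) : nat := Z.to_nat (z mod Z.of_nat n.+1).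

Lemma zmodn_lt n z : (zmodn n z < n.+1)%N.
Proof.
  apply/ltP. rewrite /zmodn. have := Z.mod_pos_bound z (Z.of_nat n.+1). lia.
Qed.

Lemma IZR_zmodn n z : exists q : Z, IZR z = (INR (zmodn n z) + INR n.+1 * IZR q)%R.
Proof.
  exists (z / Z.of_nat n.+1)%Z. rewrite /zmodn.
  have Hb := Z.mod_pos_bound z (Z.of_nat n.+1).
  rewrite INR_IZR_INZ (INR_IZR_INZ n.+1) Z2Nat.id; last by lia.
  rewrite -mult_IZR -plus_IZR. f_equal.
  have := Z.div_mod z (Z.of_nat n.+1). lia.
Qed.

(* The grid [{0..n}^2 / (n+1)] is a fundamental domain for [(Z/(n+1))^2]; a
   periodic function summed over it is invariant under invertible affine maps of Z^2. *)
Lemma grid_sum_reindex (phi : R2 -> R) (n : nat) (a1 b1 c1 a2 b2 c2 ga gb gc ha hb hc : Z) :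
  periodic phi ->
  (forall i j, aff ga gb gc (aff a1 b1 c1 i j) (aff a2 b2 c2 i j) = i /\
               aff ha hb hc (aff a1 b1 c1 i j) (aff a2 b2 c2 i j) = j) ->
  sum_f_R0 (fun i => sum_f_R0 (fun j =>
     phi (IZR (aff a1 b1 c1 (Z.of_nat i) (Z.of_nat j)) / INR n.+1,
          IZR (aff a2 b2 c2 (Z.of_nat i) (Z.of_nat j)) / INR n.+1)) n) n
  = sum_f_R0 (fun i => sum_f_R0 (fun j => phi (INR i / INR n.+1, INR j / INR n.+1)) n) n.
Proof.
  move=> Hper Hinv.
  have HN : INR n.+1 <> 0%R by apply: not_0_INR.
  rewrite !sum_f_R0_big.
  under eq_bigr => i _ do rewrite sum_f_R0_big.
  under [RHS]eq_bigr => i _ do rewrite sum_f_R0_big.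
  rewrite !pair_big /=.
  set sigma := fun p : 'I_n.+1 * 'I_n.+1 =>
    (@inord n (zmodn n (aff a1 b1 c1 (Z.of_nat p.1) (Z.of_nat p.2))),
     @inord n (zmodn n (aff a2 b2 c2 (Z.of_nat p.1) (Z.of_nat p.2)))).
  have Hsigma : injective sigma.
  { move=> [x1 x2] [y1 y2] [E1 E2].
    move: (f_equal (@nat_of_ord _) E1) (f_equal (@nat_of_ord _) E2).
    rewrite !inordK ?zmodn_lt // /zmodn => F1 F2.
    have := ltn_ord x1; have := ltn_ord x2; have := ltn_ord y1; have := ltn_ord y2.
    move=> /ltP Hy2 /ltP Hy1 /ltP Hx2 /ltP Hx1.
    have B1 := Z.mod_pos_bound (aff a1 b1 c1 (Z.of_nat x1) (Z.of_nat x2)) (Z.of_nat n.+1).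
    have B2 := Z.mod_pos_bound (aff a1 b1 c1 (Z.of_nat y1) (Z.of_nat y2)) (Z.of_nat n.+1).
    have B3 := Z.mod_pos_bound (aff a2 b2 c2 (Z.of_nat x1) (Z.of_nat x2)) (Z.of_nat n.+1).
    have B4 := Z.mod_pos_bound (aff a2 b2 c2 (Z.of_nat y1) (Z.of_nat y2)) (Z.of_nat n.+1).
    have [G1 G2] := aff_mod_inj (Z.of_nat n.+1) a1 b1 c1 a2 b2 c2 ga gb gc ha hb hc
      (Z.of_nat x1) (Z.of_nat x2) (Z.of_nat y1) (Z.of_nat y2) Hinv
      ltac:(lia) ltac:(lia) ltac:(lia) ltac:(lia) ltac:(lia) ltac:(lia).
    by congr pair; apply: val_inj => /=; lia. }
  rewrite [RHS](reindex_inj Hsigma).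
  apply: eq_bigr => [[i j]] _ /=.
  rewrite !inordK ?zmodn_lt //.
  have [q1 Q1] := IZR_zmodn n (aff a1 b1 c1 (Z.of_nat i) (Z.of_nat j)).
  have [q2 Q2] := IZR_zmodn n (aff a2 b2 c2 (Z.of_nat i) (Z.of_nat j)).
  rewrite Q1 Q2 -[RHS](Hper _ (IZR q1, IZR q2)); last by split; apply: isZ_IZR.
  rewrite /vadd /=. congr (phi (_, _)); field; auto.
Qed.

End GridSums.

Definition Zinverse (a b c d a' b' c' d' : Z) : Prop :=
  (a' * a + b' * c = 1 /\ a' * b + b' * d = 0 /\ c' * a + d' * c = 0 /\ c' * b + d' * d = 1)%Z /\
  (a * a' + b * c' = 1 /\ a * b' + b * d' = 0 /\ c * a' + d * c' = 0 /\ c * b' + d * d' = 1)%Z.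

Lemma sum_f_R0_close (f g : nat -> R) n e : (forall i, (i <= n)%nat -> Rabs (f i - g i) <= e) ->
  Rabs (sum_f_R0 f n - sum_f_R0 g n) <= INR (S n) * e.
Proof.
  induction n as [|n IH]; intro H; simpl.
  - rewrite Rmult_1_l. apply H; lia.
  - replace (sum_f_R0 f n + f (S n) - (sum_f_R0 g n + g (S n)))
      with ((sum_f_R0 f n - sum_f_R0 g n) + (f (S n) - g (S n))) by ring.
    eapply Rle_trans; [apply Rabs_triang|].
    pose proof (IH (fun i Hi => H i ltac:(lia))). pose proof (H (S n) (le_n _)).
    rewrite S_INR in *. destruct n; simpl in *; lra.
Qed.

Lemma riemann_sum_close (f g : R2 -> R) n e : (forall p, Rabs (f p - g p) <= e) ->
  Rabs (riemann_sum f n - riemann_sum g n) <= e.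
Proof.
  intro H. unfold riemann_sum; cbv zeta.
  set (N := INR (S n)). assert (HN : 0 < N) by (apply lt_0_INR; lia).
  unfold Rdiv. rewrite <- Rmult_minus_distr_r, Rabs_mult, (Rabs_pos_eq (/ (N * N)))
    by (left; apply Rinv_0_lt_compat; nra).
  assert (Hsum : Rabs (sum_f_R0 (fun i => sum_f_R0 (fun j => f (INR i * / N, INR j * / N)) n) n
      - sum_f_R0 (fun i => sum_f_R0 (fun j => g (INR i * / N, INR j * / N)) n) n) <= N * (N * e)).
  { apply sum_f_R0_close. intros i _. apply sum_f_R0_close. intros j _. apply H. }
  apply Rmult_le_reg_r with (N * N); [nra|].
  rewrite Rmult_assoc, Rinv_l, Rmult_1_r by nra. nra.
Qed.

Lemma riemann_sum_translate_grid (psi : R2 -> R) n i0 j0 : periodic psi ->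
  riemann_sum (fun p => psi (vadd p (IZR i0 / INR (S n), IZR j0 / INR (S n)))) n = riemann_sum psi n.
Proof.
  intro Hp. unfold riemann_sum; cbv zeta. f_equal.
  rewrite <- (GridSums.grid_sum_reindex psi n 1 0 i0 0 1 j0 1 0 (- i0) 0 1 (- j0)) by (auto; intros; unfold aff; split; ring).
  pose proof (not_0_INR (S n) ltac:(lia)).
  apply sum_eq; intros i _; apply sum_eq; intros j _. f_equal.
  unfold aff, vadd; cbn [fst snd]. rewrite !plus_IZR, !mult_IZR, <- !INR_IZR_INZ. f_equal; field; auto.
Qed.

Lemma riemann_sum_linmap (phi : R2 -> R) n a b c d a' b' c' d' :
  Zinverse a b c d a' b' c' d' -> periodic phi ->
  riemann_sum (fun p => phi (linmap a b c d p)) n = riemann_sum phi n.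
Proof.
  intros [[E1 [E2 [E3 E4]]] _] Hp. unfold riemann_sum; cbv zeta. f_equal.
  rewrite <- (GridSums.grid_sum_reindex phi n a b 0 c d 0 a' b' 0 c' d' 0); auto.
  - pose proof (not_0_INR (S n) ltac:(lia)).
    apply sum_eq; intros i _; apply sum_eq; intros j _. f_equal.
    unfold linmap, aff; cbn [fst snd]. rewrite !plus_IZR, !mult_IZR, <- !INR_IZR_INZ. f_equal; field; auto.
  - intros i j. unfold aff. split.
    + transitivity ((a' * a + b' * c) * i + (a' * b + b' * d) * j)%Z; [ring|]. rewrite E1, E2; ring.
    + transitivity ((c' * a + d' * c) * i + (c' * b + d' * d) * j)%Z; [ring|]. rewrite E3, E4; ring.
Qed.

Lemma torus_integral_riemann_eq (f g : R2 -> R) I :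
  (forall n, riemann_sum f n = riemann_sum g n) -> torus_integral g I -> torus_integral f I.
Proof. intros E Hg eps Heps. destruct (Hg eps Heps) as [N HN]. exists N. intros n Hn. rewrite E. auto. Qed.

(* Split [u] into a grid vector, which permutes the Riemann sum, and a remainder
   of size [O(1/n)], which moves it little by uniform continuity. *)
Lemma torus_integral_translate phi u I : cont2 phi -> periodic phi ->
  torus_integral phi I -> torus_integral (fun p => phi (vadd p u)) I.
Proof.
  intros Hc Hp HI eps Heps.
  destruct (unif_cont2_periodic phi Hc Hp (eps / 2)) as [d [Hd Hu]]; [lra|].
  destruct (HI (eps / 2)) as [N1 HN1]; [lra|].
  destruct (archimed_cor1 (d / 2)) as [N2 [HN2 HN2pos]]; [lra|].
  exists (max N1 N2). intros n Hn.
  set (N := INR (S n)).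
  assert (HN : 0 < N) by (apply lt_0_INR; lia).
  assert (HNd : 2 / N < d).
  { assert (INR N2 <= N) by (apply le_INR; lia).
    assert (0 < INR N2) by (apply lt_0_INR; lia).
    assert (/ N <= / INR N2) by (apply Rinv_le_contravar; lra).
    unfold Rdiv. lra. }
  destruct (floor_exists (N * fst u)) as [i0 Hi0]. destruct (floor_exists (N * snd u)) as [j0 Hj0].
  set (g := (IZR i0 / N, IZR j0 / N)). set (r := vsub u g).
  assert (Hr : vnorm r < d).
  { eapply Rle_lt_trans; [apply vnorm_le_l1|].
    assert (Hr1 : Rabs (fst r) <= 1 / N).
    { apply Rabs_le. unfold r, g; simpl. split; apply Rmult_le_reg_r with N; auto; field_simplify; lra. }
    assert (Hr2 : Rabs (snd r) <= 1 / N).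
    { apply Rabs_le. unfold r, g; simpl. split; apply Rmult_le_reg_r with N; auto; field_simplify; lra. }
    unfold Rdiv in *. lra. }
  set (psi := fun p => phi (vadd p r)).
  assert (Hpsi : periodic psi) by (intros p k Hk; unfold psi; rewrite vadd_comm_assoc; auto).
  assert (Eshift : riemann_sum (fun p => phi (vadd p u)) n = riemann_sum psi n).
  { rewrite <- (riemann_sum_translate_grid psi n i0 j0 Hpsi). f_equal.
    apply functional_extensionality. intro p. unfold psi. f_equal. unfold r, g, N. destruct p, u; vec_eq. }
  assert (Hclose : Rabs (riemann_sum psi n - riemann_sum phi n) <= eps / 2).
  { apply riemann_sum_close. intro p. left. unfold psi. apply Hu. rewrite vsub_vadd_l. auto. }
  pose proof (HN1 n ltac:(lia)). unfold R_dist in *. rewrite Eshift.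
  replace (riemann_sum psi n - I) with ((riemann_sum psi n - riemann_sum phi n) + (riemann_sum phi n - I)) by ring.
  eapply Rle_lt_trans; [apply Rabs_triang|]. lra.
Qed.

(** * Conjugation by translations *)

Lemma lift_unif_cont F : descends F -> contF F ->
  forall eps, 0 < eps -> near_diag (fun p q => vnorm (vsub (F q) (F p)) < eps).
Proof.
  intros HD HC eps Heps.
  assert (Hinc : forall k p q, isZ2 k ->
    vsub (F (vadd q k)) (F (vadd p k)) = vsub (F q) (F p)).
  { intros k p q Hk. pose proof (descends_increment_const F k HD HC Hk p q) as E.
    destruct (F (vadd q k)), (F (vadd p k)), (F q), (F p). unfold vsub in *; simpl in *.
    injection E; intros. f_equal; lra. }
  assert (U1 : unif_cont2 (fun p => fst (F p))).
  { apply unif_cont2_of_invariant_increments; [apply cont2_fst; auto|].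
    intros k p q Hk. exact (f_equal fst (Hinc k p q Hk)). }
  assert (U2 : unif_cont2 (fun p => snd (F p))).
  { apply unif_cont2_of_invariant_increments; [apply cont2_snd; auto|].
    intros k p q Hk. exact (f_equal snd (Hinc k p q Hk)). }
  eapply near_diag_impl; [|exact (near_diag_and _ _ (U1 (eps / 2) ltac:(lra)) (U2 (eps / 2) ltac:(lra)))].
  intros p q [H1 H2]. eapply Rle_lt_trans; [apply vnorm_le_l1|]. simpl. lra.
Qed.

Lemma deriv_entry_unif_cont F DF (pr : Mat2 -> R) : descends F -> C1_with F DF ->
  (forall M N, Rabs (pr M - pr N) <= mnorm (msub M N)) -> unif_cont2 (fun p => pr (DF p)).
Proof.
  intros HD [HDF HCM] Hpr. apply unif_cont2_of_invariant_increments.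
  - intros p eps Heps. destruct (HCM p eps Heps) as [d [Hd H]]. exists d; split; auto.
    intros q Hq. eapply Rle_lt_trans; [apply Hpr | apply H; auto].
  - intros k p q Hk. rewrite !(deriv_periodic F DF k HD HDF Hk). reflexivity.
Qed.

Lemma deriv_unif_cont F DF : descends F -> C1_with F DF ->
  forall eps, 0 < eps -> near_diag (fun p q => mnorm (msub (DF q) (DF p)) < eps).
Proof.
  intros HD HC eps Heps.
  assert (He : 0 < eps / 4) by lra.
  pose proof (fun pr Hpr => deriv_entry_unif_cont F DF pr HD HC Hpr _ He) as U.
  pose proof (U (fun M => fst (fst M)) ltac:(intros M N; apply (mnorm_entries_le (msub M N)))) as U1.
  pose proof (U (fun M => snd (fst M)) ltac:(intros M N; apply (mnorm_entries_le (msub M N)))) as U2.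
  pose proof (U (fun M => fst (snd M)) ltac:(intros M N; apply (mnorm_entries_le (msub M N)))) as U3.
  pose proof (U (fun M => snd (snd M)) ltac:(intros M N; apply (mnorm_entries_le (msub M N)))) as U4.
  eapply near_diag_impl; [|exact (near_diag_and _ _ (near_diag_and _ _ U1 U2) (near_diag_and _ _ U3 U4))].
  intros p q [[H1 H2] [H3 H4]]. eapply Rle_lt_trans; [apply mnorm_le_mabs|].
  unfold mabs; simpl in *. lra.
Qed.

(* [tr_conj F t] lifts the conjugate [T_t^-1 o f o T_t] of the torus map [f] by the translation [T_t]. *)
Definition tr_conj (F : R2 -> R2) (t : R2) : R2 -> R2 := fun p => vsub (F (vadd p t)) t.

Lemma tr_conj_descends F t : descends F -> descends (tr_conj F t).
Proof.
  intros HD p k Hk. unfold tr_conj. rewrite vadd_comm_assoc.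
  replace (vsub (vsub (F (vadd (vadd p t) k)) t) (vsub (F (vadd p t)) t))
    with (vsub (F (vadd (vadd p t) k)) (F (vadd p t))) by vec_eq.
  apply HD; auto.
Qed.

Lemma tr_conj_C1_with F DF t : C1_with F DF -> C1_with (tr_conj F t) (fun p => DF (vadd p t)).
Proof.
  intros [HD HC]. split.
  - intros p eps Heps. destruct (HD (vadd p t) eps Heps) as [d [Hd H]].
    exists d; split; auto. intros h Hh. unfold tr_conj. rewrite vadd_comm_assoc.
    replace (vsub (vsub (vsub (F (vadd (vadd p t) h)) t) (vsub (F (vadd p t)) t)) (mapply (DF (vadd p t)) h))
      with (vsub (vsub (F (vadd (vadd p t) h)) (F (vadd p t))) (mapply (DF (vadd p t)) h)) by vec_eq.
    auto.
  - intros p eps Heps. destruct (HC (vadd p t) eps Heps) as [d [Hd H]].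
    exists d; split; auto. intros q Hq. apply H.
    replace (vsub (vadd q t) (vadd p t)) with (vsub q p) by vec_eq. auto.
Qed.

Lemma tr_conj_C1 F t : Defs.C1 F -> Defs.C1 (tr_conj F t).
Proof. intros [DF H]. exists (fun p => DF (vadd p t)). apply tr_conj_C1_with; auto. Qed.

Lemma tr_conj_comp F G t p : tr_conj F t (tr_conj G t p) = tr_conj (fun q => F (G q)) t p.
Proof. unfold tr_conj. rewrite vadd_vsub. reflexivity. Qed.

Lemma tr_conj_torus_inverse F G t : torus_inverse F G -> torus_inverse (tr_conj F t) (tr_conj G t).
Proof.
  intros [HD [HC [H1 H2]]].
  split; [apply tr_conj_descends; auto|]. split; [apply tr_conj_C1; auto|].
  split; intro p; rewrite tr_conj_comp; unfold tr_conj.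
  - replace (vsub (vsub (F (G (vadd p t))) t) p) with (vsub (F (G (vadd p t))) (vadd p t)) by vec_eq. auto.
  - replace (vsub (vsub (G (F (vadd p t))) t) p) with (vsub (G (F (vadd p t))) (vadd p t)) by vec_eq. auto.
Qed.

Lemma tr_conj_diffeo F t : diffeo F -> diffeo (tr_conj F t).
Proof.
  intros [HD [HC [G HG]]]. split; [apply tr_conj_descends; auto|].
  split; [apply tr_conj_C1; auto|]. exists (tr_conj G t). apply tr_conj_torus_inverse; auto.
Qed.

Lemma linmap_vadd a b c d u v : linmap a b c d (vadd u v) = vadd (linmap a b c d u) (linmap a b c d v).
Proof. unfold linmap, vadd; simpl; f_equal; ring. Qed.

Lemma linmap_vsub a b c d u v : linmap a b c d (vsub u v) = vsub (linmap a b c d u) (linmap a b c d v).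
Proof. unfold linmap, vsub; simpl; f_equal; ring. Qed.

Lemma linmap_vscal a b c d s v : linmap a b c d (vscal s v) = vscal s (linmap a b c d v).
Proof. unfold linmap, vscal; simpl; f_equal; ring. Qed.

(* A translation by a fixed point of the involution commutes with it. *)
Lemma tr_conj_reversible a b c d F t : linmap a b c d t = t ->
  reversible (linmap a b c d) F -> reversible (linmap a b c d) (tr_conj F t).
Proof.
  intros Ht [G [HG HR]]. exists (tr_conj G t). split; [apply tr_conj_torus_inverse; auto|].
  intro p. unfold tr_conj. rewrite linmap_vsub, Ht.
  replace (vadd (linmap a b c d p) t) with (linmap a b c d (vadd p t)) by (rewrite linmap_vadd, Ht; reflexivity).
  replace (vsub (vsub (linmap a b c d (F (vadd p t))) t) (vsub (G (linmap a b c d (vadd p t))) t))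
    with (vsub (linmap a b c d (F (vadd p t))) (G (linmap a b c d (vadd p t)))) by vec_eq.
  apply HR.
Qed.

Lemma iterF_tr_conj F t n p : iterF (tr_conj F t) n p = vsub (iterF F n (vadd p t)) t.
Proof.
  induction n; simpl; [rewrite vsub_vadd; auto|].
  rewrite IHn. unfold tr_conj. rewrite vadd_vsub. auto.
Qed.

Lemma iterDF_tr_conj F DF t n p :
  iterDF (tr_conj F t) (fun q => DF (vadd q t)) n p = iterDF F DF n (vadd p t).
Proof. induction n; simpl; auto. rewrite IHn, iterF_tr_conj, vadd_vsub. auto. Qed.

Lemma tr_conj_anosov F t : anosov F -> anosov (tr_conj F t).
Proof.
  intros [DF [HC1 [Es [Eu [Hsub [Hper [Hspl [Hint [HinvS [HinvU [C [lam [HC [Hlam [Hs Hu]]]]]]]]]]]]]]].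
  exists (fun q => DF (vadd q t)). split; [apply tr_conj_C1_with; auto|].
  exists (fun p => Es (vadd p t)), (fun p => Eu (vadd p t)).
  split; [intro p; apply Hsub|].
  split; [intros p k Hk v; rewrite vadd_comm_assoc; apply Hper; auto|].
  split; [intros p v; apply Hspl|].
  split; [intros p v; apply Hint|].
  split; [intros p w; unfold tr_conj; rewrite vadd_vsub; apply HinvS|].
  split; [intros p w; unfold tr_conj; rewrite vadd_vsub; apply HinvU|].
  exists C, lam. do 3 (split; auto).
  - intros p v n Hv. rewrite iterDF_tr_conj. apply Hs; auto.
  - intros p v n Hv. rewrite iterDF_tr_conj. apply Hu; auto.
Qed.

Lemma torus_integral_ext (f g : R2 -> R) I : (forall p, f p = g p) -> torus_integral f I -> torus_integral g I.
Proof. intros H Hf. replace g with f; auto. apply functional_extensionality. auto. Qed.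

Lemma periodic_comp_descends phi F : periodic phi -> descends F -> periodic (fun p => phi (F p)).
Proof.
  intros Hp HD p k Hk.
  replace (F (vadd p k)) with (vadd (F p) (vsub (F (vadd p k)) (F p)))
    by (destruct (F p), (F (vadd p k)); vec_eq).
  apply Hp, HD; auto.
Qed.

Lemma tr_conj_area_preserving F t : descends F -> contF F -> area_preserving F ->
  area_preserving (tr_conj F t).
Proof.
  intros HD HC HA phi Hc Hp I HI.
  set (psi := fun q => phi (vadd q (vscal (-1) t))).
  assert (Cpsi : cont2 psi) by (apply cont2_translate; auto).
  assert (Ppsi : periodic psi) by (intros q k Hk; unfold psi; rewrite vadd_comm_assoc; auto).
  assert (I1 : torus_integral (fun q => psi (F q)) I)
    by (apply HA; auto; apply torus_integral_translate; auto).
  apply (torus_integral_translate _ t) in I1;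
    [| apply cont2_comp; auto | apply periodic_comp_descends; auto].
  eapply torus_integral_ext; [|exact I1]. intro p. unfold psi, tr_conj.
  f_equal. vec_eq.
Qed.

Lemma tr_conj_C1_close F DF : descends F -> C1_with F DF ->
  forall eps, 0 < eps -> exists d, 0 < d /\ forall t, vnorm t < d -> C1_close eps F (tr_conj F t).
Proof.
  intros HD HC1 eps Heps.
  pose proof (has_deriv_contF F DF (proj1 HC1)) as HC.
  destruct (near_diag_and _ _ (lift_unif_cont F HD HC (eps / 2) ltac:(lra))
             (deriv_unif_cont F DF HD HC1 eps Heps)) as [d [Hd Hnear]].
  exists (Rmin d (eps / 2)). split; [apply Rmin_glb_lt; lra|]. intros t Ht.
  exists DF, (fun p => DF (vadd p t)). split; auto. split; [apply tr_conj_C1_with; auto|].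
  exists vzero. split; [apply isZ2_vzero|]. intro p.
  assert (Hpt : vnorm (vsub p (vadd p t)) < d).
  { rewrite vnorm_vsub_sym, vsub_vadd_l. eapply Rlt_Rmin_l; eauto. }
  destruct (Hnear _ _ Hpt) as [HF HDF]. split; auto.
  replace (vsub (vsub (F p) (tr_conj F t p)) vzero) with (vadd (vsub (F p) (F (vadd p t))) t)
    by (unfold tr_conj; vec_eq).
  eapply Rle_lt_trans; [apply vnorm_triangle|].
  pose proof (Rlt_Rmin_r _ _ _ Ht). lra.
Qed.

Lemma tr_conj_rev_anosov_area a b c d F t : linmap a b c d t = t ->
  rev_anosov_area (linmap a b c d) F -> rev_anosov_area (linmap a b c d) (tr_conj F t).
Proof.
  intros Ht [Hdif [Harea [Hrev Hanos]]].
  pose proof Hdif as [HD [[DF [HDF _]] _]].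
  split; [apply tr_conj_diffeo; auto|]. split; [apply tr_conj_area_preserving; auto; eapply has_deriv_contF; eauto|].
  split; [apply tr_conj_reversible; auto | apply tr_conj_anosov; auto].
Qed.

(** * Anosov maps are not invariant under small translations *)

Lemma small_multiple v B : 0 < B -> exists s1, 0 < s1 /\ forall s, 0 < s < s1 -> vnorm (vscal s v) < B.
Proof.
  intro HB. pose proof (vnorm_ge0 v).
  exists (B / (vnorm v + 1)). split; [apply Rdiv_lt_0_compat; lra|].
  intros s [Hs Hs1]. rewrite vnorm_vscal, Rabs_pos_eq by lra.
  apply (Rmult_lt_compat_r (vnorm v + 1)) in Hs1; [|lra].
  replace (B / (vnorm v + 1) * (vnorm v + 1)) with B in Hs1 by (field; lra). nra.
Qed.

(* The lifts differ by an integer vector of norm < 1, hence coincide. *)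
Lemma same_tr_conj_translation_eq F v p : contF F ->
  (exists s0, 0 < s0 /\ forall s, 0 < s < s0 -> same_torus_map F (tr_conj F (vscal s v))) ->
  exists s1, 0 < s1 /\ forall s, 0 < s < s1 -> F (vadd p (vscal s v)) = vadd (F p) (vscal s v).
Proof.
  intros HC [s0 [Hs0 Hsame]].
  destruct (HC p (1 / 2)) as [d [Hd Hcont]]; [lra|].
  destruct (small_multiple v (Rmin d (1 / 2))) as [s1 [Hs1 Hsmall]]; [apply Rmin_glb_lt; lra|].
  exists (Rmin s0 s1). split; [apply Rmin_glb_lt; auto|]. intros s [Hs Hss].
  pose proof (Hsmall s (conj Hs (Rlt_Rmin_r _ _ _ Hss))) as Hsv.
  set (t := vscal s v) in *.
  assert (Hk : vsub (F p) (tr_conj F t p) = vzero).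
  { apply isZ2_small; [apply Hsame; split; [|eapply Rlt_Rmin_l]; eauto|].
    replace (vsub (F p) (tr_conj F t p)) with (vadd (vscal (-1) (vsub (F (vadd p t)) (F p))) t)
      by (unfold tr_conj; destruct (F p), (F (vadd p t)); vec_eq).
    eapply Rle_lt_trans; [apply vnorm_triangle|]. rewrite vnorm_vopp.
    pose proof (Hcont (vadd p t) ltac:(rewrite vsub_vadd_l; eapply Rlt_Rmin_l; eauto)).
    pose proof (Rlt_Rmin_r _ _ _ Hsv). lra. }
  apply vsub_eq0 in Hk. rewrite Hk. unfold tr_conj. rewrite vadd_vsub. reflexivity.
Qed.

Lemma deriv_fixes_of_translation_eq F DF v p : has_deriv F DF ->
  (exists s1, 0 < s1 /\ forall s, 0 < s < s1 -> F (vadd p (vscal s v)) = vadd (F p) (vscal s v)) ->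
  mapply (DF p) v = v.
Proof.
  intros HD [s1 [Hs1 Heq]]. apply vsub_eq0, vnorm_le_eps_eq0. intros eps Heps.
  pose proof (vnorm_ge0 v).
  set (e := eps / (vnorm v + 1)).
  assert (He : 0 < e) by (unfold e; apply Rdiv_lt_0_compat; lra).
  destruct (HD p e He) as [d [Hd Hlin]].
  destruct (small_multiple v d Hd) as [s2 [Hs2 Hsmall]].
  set (s := Rmin s1 s2 / 2).
  assert (Hmin : 0 < Rmin s1 s2) by (apply Rmin_glb_lt; auto).
  assert (Hs : 0 < s < s1 /\ s < s2) by (unfold s; pose proof (Rmin_l s1 s2); pose proof (Rmin_r s1 s2); lra).
  pose proof (Hlin (vscal s v) (Hsmall s ltac:(lra))) as L.
  rewrite Heq in L by lra.
  replace (vsub (vsub (vadd (F p) (vscal s v)) (F p)) (mapply (DF p) (vscal s v)))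
    with (vscal s (vsub v (mapply (DF p) v))) in L by (rewrite mapply_vscal; destruct (F p); vec_eq).
  rewrite !vnorm_vscal, Rabs_pos_eq in L by lra.
  rewrite vnorm_vsub_sym.
  assert (vnorm (vsub v (mapply (DF p) v)) <= e * vnorm v) by (apply Rmult_le_reg_l with s; lra).
  assert (e * (vnorm v + 1) = eps) by (unfold e; field; lra).
  nra.
Qed.

Lemma geometric_bound_eq0 C lam K x : 0 < lam < 1 -> 0 <= x ->
  (forall n, x <= C * lam ^ n * K) -> x = 0.
Proof.
  intros Hlam Hx H.
  destruct (Rle_lt_or_eq_dec 0 x Hx) as [Hpos|]; auto. exfalso.
  assert (HCKn : forall n, x <= C * K * lam ^ n) by (intro n; replace (C * K * lam ^ n) with (C * lam ^ n * K) by ring; apply H).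
  set (CK := C * K) in *.
  destruct (Rle_or_lt CK 0) as [HCK|HCK].
  - specialize (HCKn 0%nat). simpl in HCKn. lra.
  - destruct (pow_lt_1_zero lam ltac:(rewrite Rabs_pos_eq; lra) (x / CK)) as [N HN];
      [apply Rdiv_lt_0_compat; lra|].
    specialize (HN N (le_n N)). rewrite Rabs_pos_eq in HN by (apply pow_le; lra).
    apply (Rmult_lt_compat_l CK) in HN; auto.
    replace (CK * (x / CK)) with x in HN by (field; lra). specialize (HCKn N). lra.
Qed.

Lemma anosov_no_fixed_vector F v : anosov F -> v <> vzero ->
  ~ (forall DF, has_deriv F DF -> forall p, mapply (DF p) v = v).
Proof.
  intros [DF [[HDF _] [Es [Eu [_ [_ [Hspl [_ [_ [_ [C [lam [HC [Hlam [Hs Hu]]]]]]]]]]]]]]] Hv Hfix.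
  assert (Hit : forall n, mapply (iterDF F DF n vzero) v = v).
  { induction n; simpl; [apply mapply_mid|]. rewrite mapply_mmul, IHn. apply Hfix; auto. }
  destruct (Hspl vzero v) as [s [u [Hs0 [Hu0 Hsu]]]].
  set (D n := mapply (iterDF F DF n vzero)).
  assert (Hsplit : forall n, D n u = vadd v (vscal (-1) (D n s))).
  { intro n. assert (E : vadd (D n s) (D n u) = v) by (unfold D; rewrite <- mapply_vadd, <- Hsu; apply Hit).
    rewrite <- E. destruct (D n s), (D n u). vec_eq. }
  assert (Hlam_le : forall n, lam ^ n <= 1)
    by (induction n; simpl; [lra | pose proof (pow_le lam n ltac:(lra)); nra]).
  assert (Hu_zero : u = vzero).
  { apply vnorm_eq0, (geometric_bound_eq0 C lam (vnorm v + C * vnorm s)); auto using vnorm_ge0.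
    intro n. eapply Rle_trans; [apply (Hu vzero u n Hu0)|]. fold (D n).
    apply Rmult_le_compat_l; [pose proof (pow_le lam n ltac:(lra)); nra|].
    rewrite Hsplit. eapply Rle_trans; [apply vnorm_triangle|]. rewrite vnorm_vopp.
    pose proof (Hs vzero s n Hs0) as Hsn. fold (D n) in Hsn.
    assert (C * lam ^ n * vnorm s <= C * vnorm s).
    { apply Rmult_le_compat_r; [apply vnorm_ge0|].
      rewrite <- (Rmult_1_r C) at 2. apply Rmult_le_compat_l; [lra | apply Hlam_le]. }
    lra. }
  apply Hv, vnorm_eq0, (geometric_bound_eq0 C lam (vnorm v)); auto using vnorm_ge0.
  intro n. rewrite <- (Hit n) at 1. apply Hs.
  replace v with s by (rewrite Hsu, Hu_zero; destruct s; vec_eq). auto.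
Qed.

(** * Hyperbolic toral automorphisms *)

Lemma linmap_comp a b c d e f g h p :
  linmap a b c d (linmap e f g h p) = linmap (a * e + b * g) (a * f + b * h) (c * e + d * g) (c * f + d * h) p.
Proof. unfold linmap; simpl; rewrite !plus_IZR, !mult_IZR; f_equal; ring. Qed.

Lemma linmap_id p : linmap 1 0 0 1 p = p.
Proof. destruct p; unfold linmap; simpl; f_equal; ring. Qed.

Definition zmat (a b c d : Z) : Mat2 := ((IZR a, IZR b), (IZR c, IZR d)).

Lemma mapply_zmat a b c d v : mapply (zmat a b c d) v = linmap a b c d v.
Proof. reflexivity. Qed.

Lemma linmap_descends a b c d : descends (linmap a b c d).
Proof.
  intros p k [[k1 Hk1] [k2 Hk2]]. rewrite <- linmap_vsub, vsub_vadd_l.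
  split; simpl; rewrite Hk1, Hk2; apply isZ_add; apply isZ_mul; apply isZ_IZR.
Qed.

Lemma linmap_C1_with a b c d : C1_with (linmap a b c d) (fun _ => zmat a b c d).
Proof.
  split.
  - intros p eps Heps. exists 1; split; [lra|]. intros h Hh.
    rewrite mapply_zmat, <- linmap_vsub, vsub_vadd_l.
    replace (vsub (linmap a b c d h) (linmap a b c d h)) with vzero by vec_eq.
    rewrite vnorm_vzero. pose proof (vnorm_ge0 h). nra.
  - intros p eps Heps. exists 1; split; [lra|]. intros q Hq.
    unfold msub, vsub, mnorm; simpl. rewrite !Rminus_diag.
    match goal with |- sqrt ?x < _ => replace x with 0 by ring end. rewrite sqrt_0. auto.
Qed.

Lemma linmap_torus_inverse a b c d a' b' c' d' :
  Zinverse a b c d a' b' c' d' -> torus_inverse (linmap a b c d) (linmap a' b' c' d').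
Proof.
  intros [[E1 [E2 [E3 E4]]] [F1 [F2 [F3 F4]]]].
  split; [apply linmap_descends|]. split; [eexists; apply linmap_C1_with|].
  split; intro p; rewrite linmap_comp.
  - rewrite F1, F2, F3, F4, linmap_id. replace (vsub p p) with vzero by vec_eq. apply isZ2_vzero.
  - rewrite E1, E2, E3, E4, linmap_id. replace (vsub p p) with vzero by vec_eq. apply isZ2_vzero.
Qed.

Lemma linmap_diffeo a b c d a' b' c' d' : Zinverse a b c d a' b' c' d' -> diffeo (linmap a b c d).
Proof.
  intro Hinv. split; [apply linmap_descends|]. split; [eexists; apply linmap_C1_with|].
  eexists. apply linmap_torus_inverse; eauto.
Qed.

Lemma linmap_area_preserving a b c d a' b' c' d' :
  Zinverse a b c d a' b' c' d' -> area_preserving (linmap a b c d).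
Proof.
  intros Hinv phi Hc Hp I HI. apply (torus_integral_riemann_eq _ phi); auto.
  intro n. apply (riemann_sum_linmap phi n a b c d a' b' c' d' Hinv Hp).
Qed.

Definition span1 (e : R2) (v : R2) : Prop := exists x, v = vscal x e.

Lemma span1_subspace e : subspace (span1 e).
Proof.
  split; [exists 0; destruct e; vec_eq|]. split.
  - intros u v [x ->] [y ->]. exists (x + y). vec_eq.
  - intros r v [x ->]. exists (r * x). vec_eq.
Qed.

Lemma span1_mapply_eigen M e l : l <> 0 -> mapply M e = vscal l e ->
  forall w, span1 e w <-> exists v, span1 e v /\ w = mapply M v.
Proof.
  intros Hl He w. split.
  - intros [x ->]. exists (vscal (x / l) e). split; [eexists; eauto|].
    rewrite mapply_vscal, He. destruct e; unfold vscal; simpl; f_equal; field; auto.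
  - intros [v [[x ->] ->]]. rewrite mapply_vscal, He. exists (x * l). destruct e; vec_eq.
Qed.

Lemma iterDF_const_mapply F M n p v :
  mapply (iterDF F (fun _ => M) n p) v = Nat.iter n (mapply M) v.
Proof. induction n; simpl; [apply mapply_mid|]. rewrite mapply_mmul, IHn. auto. Qed.

Lemma iter_mapply_eigen M e l x n : mapply M e = vscal l e ->
  Nat.iter n (mapply M) (vscal x e) = vscal (x * l ^ n) e.
Proof.
  intro He. induction n; simpl; [destruct e; vec_eq|].
  rewrite IHn, mapply_vscal, He. destruct e; vec_eq.
Qed.

Lemma anosov_of_eigenbasis a b c d es eu ls lu :
  mapply (zmat a b c d) es = vscal ls es -> mapply (zmat a b c d) eu = vscal lu eu ->
  fst es * snd eu - snd es * fst eu <> 0 ->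
  0 < Rabs ls < 1 -> Rabs ls * Rabs lu = 1 ->
  anosov (linmap a b c d).
Proof.
  intros Hes Heu Hdet Hls Hprod.
  assert (Hls0 : ls <> 0) by (intro E; rewrite E, Rabs_R0 in Hls; lra).
  assert (Hlu0 : lu <> 0) by (intro E; rewrite E, Rabs_R0 in Hprod; lra).
  exists (fun _ => zmat a b c d). split; [apply linmap_C1_with|].
  exists (fun _ => span1 es), (fun _ => span1 eu).
  split; [intro; split; apply span1_subspace|].
  split; [intros; tauto|].
  split.
  { intros p v.
    exists (vscal ((fst v * snd eu - snd v * fst eu) / (fst es * snd eu - snd es * fst eu)) es),
           (vscal ((fst es * snd v - snd es * fst v) / (fst es * snd eu - snd es * fst eu)) eu).
    split; [eexists; eauto|]. split; [eexists; eauto|].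
    destruct v, es, eu; unfold vscal, vadd; simpl in *; f_equal; field; auto. }
  split.
  { intros p v [x ->] [y Hxy]. destruct es as [e1 e2], eu as [u1 u2].
    unfold vscal in *; simpl in *. injection Hxy; intros E2 E1.
    assert (x * (e1 * u2 - e2 * u1) = 0)
      by (replace (x * (e1 * u2 - e2 * u1)) with (x * e1 * u2 - x * e2 * u1) by ring; rewrite E1, E2; ring).
    assert (x = 0) by (apply Rmult_integral in H; tauto).
    subst x. unfold vzero; f_equal; ring. }
  split; [intros p w; apply (span1_mapply_eigen _ _ ls); auto|].
  split; [intros p w; apply (span1_mapply_eigen _ _ lu); auto|].
  exists 1, (Rabs ls). split; [lra|]. split; [exact Hls|]. split.
  - intros p v n [x ->]. rewrite iterDF_const_mapply, (iter_mapply_eigen _ _ ls) by auto.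
    rewrite !vnorm_vscal, Rabs_mult, RPow_abs. lra.
  - intros p v n [x ->]. rewrite iterDF_const_mapply, (iter_mapply_eigen _ _ lu) by auto.
    rewrite !vnorm_vscal, Rabs_mult, <- !RPow_abs.
    replace (1 * Rabs ls ^ n * (Rabs x * Rabs lu ^ n * vnorm eu))
      with ((Rabs ls * Rabs lu) ^ n * (Rabs x * vnorm eu)) by (rewrite Rpow_mult_distr; ring).
    rewrite Hprod, pow1. lra.
Qed.

(* Eigenvalues [(T -/+ sqrt (T^2 - 4 det)) / 2] with eigenvectors [(b, l - a)]; [b <> 0]
   because a triangular unimodular integer matrix has trace at most 2. *)
Lemma linmap_anosov a b c d :
  (a * d - b * c = 1 \/ a * d - b * c = -1)%Z -> (3 <= a + d)%Z -> anosov (linmap a b c d).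
Proof.
  intros Hdet Htr.
  assert (Hb : IZR b <> 0).
  { apply not_0_IZR. intro Hb0. subst b. rewrite Z.mul_0_l, Z.sub_0_r in Hdet.
    destruct Hdet as [Hd|Hd]; [| assert (a * (- d) = 1)%Z as Hd' by lia; clear Hd; rename Hd' into Hd];
      destruct (Z.eq_mul_1 _ _ Hd) as [-> | ->]; lia. }
  set (dt := IZR a * IZR d - IZR b * IZR c).
  assert (Hdt : dt = 1 \/ dt = -1)
    by (unfold dt; rewrite <- !mult_IZR, <- minus_IZR; destruct Hdet as [-> | ->]; auto).
  set (T := IZR a + IZR d).
  assert (HT : 3 <= T) by (unfold T; rewrite <- plus_IZR; apply IZR_le; auto).
  set (D := T * T - 4 * dt).
  assert (HD : 5 <= D) by (unfold D; destruct Hdt as [-> | ->]; nra).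
  set (sD := sqrt D).
  assert (HsD : sD * sD = D) by (apply sqrt_sqrt; lra).
  assert (HsD0 : 0 < sD) by (apply sqrt_lt_R0; lra).
  set (ls := (T - sD) / 2). set (lu := (T + sD) / 2).
  assert (Hprod : ls * lu = dt) by (unfold ls, lu; unfold D in HsD; nra).
  assert (Hlu : 1 < lu) by (unfold lu; lra).
  assert (Habs : Rabs ls * Rabs lu = 1)
    by (rewrite <- Rabs_mult, Hprod; destruct Hdt as [-> | ->]; [apply Rabs_R1 | rewrite Rabs_left; lra]).
  assert (Hls0 : ls <> 0) by (intro E; rewrite E in Hprod; destruct Hdt; lra).
  assert (Hls : 0 < Rabs ls < 1).
  { split; [apply Rabs_pos_lt; auto|]. rewrite (Rabs_pos_eq lu) in Habs by lra.
    pose proof (Rabs_pos ls). nra. }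
  assert (Hchar : forall l, l * l - T * l + dt = 0 ->
            mapply (zmat a b c d) (IZR b, l - IZR a) = vscal l (IZR b, l - IZR a)).
  { intros l Hl. unfold mapply, zmat, vscal; simpl. unfold T, dt in Hl. f_equal; nra. }
  apply (anosov_of_eigenbasis a b c d (IZR b, ls - IZR a) (IZR b, lu - IZR a) ls lu); auto.
  - apply Hchar. unfold ls; unfold D in HsD; nra.
  - apply Hchar. unfold lu; unfold D in HsD; nra.
  - simpl. replace (IZR b * (lu - IZR a) - (ls - IZR a) * IZR b) with (IZR b * sD) by (unfold lu, ls; field).
    apply Rmult_integral_contrapositive; split; lra.
Qed.

(** * Linear involutions *)

Lemma involution_trace0 a b c d :
  (a * a + b * c = 1 /\ a * b + b * d = 0 /\ c * a + d * c = 0 /\ c * b + d * d = 1)%Z ->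
  ~ (a = 1 /\ b = 0 /\ c = 0 /\ d = 1)%Z -> ~ (a = -1 /\ b = 0 /\ c = 0 /\ d = -1)%Z ->
  d = (- a)%Z.
Proof.
  intros [H1 [H2 [H3 H4]]] Hn1 Hn2.
  destruct (Z.eq_dec (a + d) 0) as [|Hne]; [lia|].
  assert (Hb : (b * (a + d) = 0)%Z) by lia. assert (Hc : (c * (a + d) = 0)%Z) by lia.
  apply Z.mul_eq_0 in Hb, Hc.
  destruct Hb as [->|]; [|lia]. destruct Hc as [->|]; [|lia].
  assert (Ha : (a * a = 1)%Z) by lia. assert (Hd : (d * d = 1)%Z) by lia.
  destruct (Z.eq_mul_1 _ _ Ha) as [-> | ->]; destruct (Z.eq_mul_1 _ _ Hd) as [-> | ->]; lia.
Qed.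

Lemma involution_fixed_vector a b c : (a * a + b * c = 1)%Z ->
  exists v, v <> vzero /\ linmap a b c (- a) v = v.
Proof.
  intros H.
  assert (Hr : IZR a * IZR a + IZR b * IZR c = 1) by (rewrite <- !mult_IZR, <- plus_IZR, H; reflexivity).
  destruct (Z.eq_dec a (-1)) as [->|Ha].
  - exists (IZR b, 2). split; [unfold vzero; intro E; injection E; lra|].
    unfold linmap; simpl. f_equal; nra.
  - exists (IZR (a + 1), IZR c). split.
    + unfold vzero; intro E; injection E; intros _ E1. apply eq_IZR in E1. lia.
    + unfold linmap; simpl. rewrite !opp_IZR, !plus_IZR. f_equal; nra.
Qed.

(* A second involution [B = ((p, q), (r, -p))] making [A B] hyperbolic. *)
Lemma exists_hyperbolic_partner a b c : (a * a + b * c = 1)%Z ->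
  exists p q r : Z, (p * p + q * r = 1)%Z /\ (3 <= 2 * a * p + b * r + c * q)%Z.
Proof.
  intro H. destruct (Z.eq_dec b 0) as [->|Hb].
  - set (p := (a * (2 * c * c + 4))%Z).
    exists p, 1%Z, (1 - p * p)%Z. split; [ring|]. unfold p. assert (a * a = 1)%Z by lia. nia.
  - exists 1%Z, 0%Z, ((2 * a * a + 4) * b)%Z. split; [ring|].
    assert (1 <= b * b)%Z by nia. nia.
Qed.

(* The product of two involutions is reversible with respect to either factor. *)
Lemma exists_rev_anosov_area a b c : (a * a + b * c = 1)%Z ->
  exists F, rev_anosov_area (linmap a b c (- a)) F.
Proof.
  intro H. destruct (exists_hyperbolic_partner a b c H) as [p [q [r [Hpqr Htr]]]].
  assert (Hinv : Zinverse (a * p + b * r) (a * q - b * p) (c * p - a * r) (c * q + a * p)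
                          (p * a + q * c) (p * b - q * a) (r * a - p * c) (r * b + p * a))
    by (repeat split; nia).
  exists (linmap (a * p + b * r) (a * q - b * p) (c * p - a * r) (c * q + a * p)).
  split; [eapply linmap_diffeo; eauto|]. split; [eapply linmap_area_preserving; eauto|]. split.
  - exists (linmap (p * a + q * c) (p * b - q * a) (r * a - p * c) (r * b + p * a)).
    split; [apply linmap_torus_inverse; auto|].
    intro x. rewrite !linmap_comp.
    match goal with |- isZ2 (vsub (linmap ?x1 ?x2 ?x3 ?x4 x) (linmap ?y1 ?y2 ?y3 ?y4 x)) =>
      replace y1 with x1 by nia; replace y2 with x2 by nia;
      replace y3 with x3 by nia; replace y4 with x4 by nia end.
    replace (vsub _ _) with vzero by (destruct (linmap _ _ _ _ x); vec_eq). apply isZ2_vzero.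
  - apply linmap_anosov; [left; nia | lia].
Qed.

Theorem mainTheorem15 (a b c d : Z)
  (hdet : (a * d - b * c = 1)%Z \/ (a * d - b * c = -1)%Z)
  (hinv : (a * a + b * c = 1)%Z /\ (a * b + b * d = 0)%Z /\
          (c * a + d * c = 0)%Z /\ (c * b + d * d = 1)%Z)
  (hnotid : ~ (a = 1 /\ b = 0 /\ c = 0 /\ d = 1)%Z)
  (hnotmid : ~ (a = -1 /\ b = 0 /\ c = 0 /\ d = -1)%Z) :
  (exists F, rev_anosov_area (linmap a b c d) F) /\
  (forall F, rev_anosov_area (linmap a b c d) F ->
     forall eps, 0 < eps ->
       exists G, rev_anosov_area (linmap a b c d) G /\ C1_close eps F G /\
                 ~ same_torus_map F G).
Proof.
  (* [hdet] is implied by [hinv]. *)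
  pose proof (involution_trace0 a b c d hinv hnotid hnotmid) as ->.
  destruct hinv as [Hinv _].
  split; [apply exists_rev_anosov_area; auto|].
  intros F HF eps Heps.
  pose proof HF as [[HD _] [_ [_ Hanos]]]. pose proof Hanos as [DF [HC1 _]].
  destruct (involution_fixed_vector a b c Hinv) as [v [Hv Hfix]].
  destruct (tr_conj_C1_close F DF HD HC1 eps Heps) as [dl [Hdl Hclose]].
  destruct (small_multiple v dl Hdl) as [s0 [Hs0 Hsmall]].
  destruct (classic (exists s, 0 < s < s0 /\ ~ same_torus_map F (tr_conj F (vscal s v))))
    as [[s [Hs Hnot]] | Hsame].
  - exists (tr_conj F (vscal s v)). split; [|split; auto].
    apply tr_conj_rev_anosov_area; auto. rewrite linmap_vscal, Hfix. reflexivity.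
  - exfalso. apply (anosov_no_fixed_vector F v Hanos Hv). intros DF' HDF' p.
    apply (deriv_fixes_of_translation_eq F DF' v p HDF'), same_tr_conj_translation_eq;
      [eapply has_deriv_contF; eauto|].
    exists s0. split; auto. intros s Hs. apply NNPP. intro Hnot. apply Hsame. eauto.
Qed.
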